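(* In the setting of the context, fix $n\in\{0,1,\dots,T/\tau-1\}$ and suppose the MTI-FA iterates satisfy $|y^n|\le C_0+1$ and $|\dot y^n|\le (C_0+1)/\varepsilon^2$. Let $\tilde y^n$ solve $\varepsilon^2\ddot{\tilde y}^n(s)+(\alpha+\varepsilon^{-2})\tilde y^n(s)+g(|\tilde y^n(s)|^2)\tilde y^n(s)=0$ for $s>0$, $\tilde y^n(0)=y^n$, $\dot{\tilde y}^n(0)=\dot y^n$, and set $\eta^n(s)=y(t_n+s)-\tilde y^n(s)$, $\dot\eta^n(s)=\dot y(t_n+s)-\dot{\tilde y}^n(s)$, $e^n=y(t_n)-y^n$, $\dot e^n=\dot y(t_n)-\dot y^n$. Then $$\mathcal E(\eta^n(\tau),\dot\eta^n(\tau))-\mathcal E(e^n,\dot e^n)\lesssim\tau\,\mathcal E(e^n,\dot e^n),\qquad 0\le\tau\le\tau_1,$$ where $\tau_1=(2C_0+4)^{-1}K_1^{-1}$ with $K_1=\|g\|_{L^\infty(0,(2C_0+4)^2)}$, and $\mathcal E(e,\dot e)=\varepsilon^2|\dot e|^2+(\alpha+\varepsilon^{-2})|e|^2$ for $e,\dot e\in\mathbb{C}$.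
   Context: Setting. Let $0<\varepsilon\le1$, $\alpha\ge0$, $\lambda\in\mathbb{R}$, $p\in\mathbb{N}_0=\{0,1,2,\dots\}$, $g(\rho)=\lambda\rho^p$ and $f(y)=g(|y|^2)y$ for $y\in\mathbb{C}$. Let $\phi_1,\phi_2\in\mathbb{C}$ (independent of $\varepsilon$) and let $y(t)\in\mathbb{C}$ solve $\varepsilon^2\ddot y+(\alpha+\varepsilon^{-2})y+f(y)=0$ for $t>0$, $y(0)=\phi_1$, $\dot y(0)=\phi_2/\varepsilon^2$. Let $T^*$ be the maximal existence time, fix $0<T<T^*$, and assume $y\in C^2(0,T)$ with $\|\frac{d^m}{dt^m}y\|_{L^\infty(0,T)}\lesssim\varepsilon^{-2m}$ for $m=0,1,2$. Set $C_0=\max\{\|y\|_{L^\infty(0,T)},\varepsilon^2\|\dot y\|_{L^\infty(0,T)},\varepsilon^4\|\ddot y\|_{L^\infty(0,T)}\}$. $A\lesssim B$ means $|A|\le CB$ for a generic constant $C>0$ independent of $\tau$ (or $n$) and $\varepsilon$. $\tau>0$ is the time step, $t_n=n\tau$, $\bar z$ denotes complex conjugation, $\omega=\sqrt{1+\varepsilon^2\alpha}/\varepsilon^2$. The iterates $(y^n,\dot y^n)$ are those of the scheme MTI-FA: For $k=0,\dots,p$ let $\langle p_1,p_2,p_3\rangle_k$ be the set of $(p_1,p_2,p_3)\in\mathbb{N}_0^3$ with $p_1+2p_2+p_3=p-k$, $p_3\in\{0,1\}$; $g_\pm(\rho_+,\rho_-)=\sum_{\langle p_1,p_2,p_3\rangle_0}\lambda(\rho_++\rho_-)^{p_1}(\rho_+\rho_-)^{p_2}(\rho_\mp)^{p_3}$;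 for $k=1,\dots,p$, $g_k(z_+,z_-)=\lambda z_+^{k+1}z_-^{k}\sum_{\langle p_1,p_2,p_3\rangle_k}(|z_+|^2+|z_-|^2)^{p_1}|z_+|^{2p_2}|z_-|^{2p_2+2p_3}$, $P_k=\int_0^\tau\frac{\sin(\omega(\tau-\theta))}{\varepsilon^2\omega}e^{i(2k+1)\theta/\varepsilon^2}d\theta$, $Q_k=\int_0^\tau\frac{\sin(\omega(\tau-\theta))}{\varepsilon^2\omega}e^{i(2k+1)\theta/\varepsilon^2}\theta\,d\theta$, $\dot P_k=\int_0^\tau\frac{\cos(\omega(\tau-\theta))}{\varepsilon^2}e^{i(2k+1)\theta/\varepsilon^2}d\theta$, $\dot Q_k=\int_0^\tau\frac{\cos(\omega(\tau-\theta))}{\varepsilon^2}e^{i(2k+1)\theta/\varepsilon^2}\theta\,d\theta$ (empty sums if $p=0$). Set $y^0=\phi_1$, $\dot y^0=\phi_2/\varepsilon^2$; given $(y^n,\dot y^n)$ let $z_+^{(0)}=\frac{y^n-i\varepsilon^2\dot y^n}{2}$, $z_-^{(0)}=\frac{\overline{y^n}-i\varepsilon^2\overline{\dot y^n}}{2}$, $\mu_\pm=\frac12g_\pm(|z_+^{(0)}|^2,|z_-^{(0)}|^2)+\frac\alpha2$, $\dot z_\pm^{(0)}=i\mu_\pm z_\pm^{(0)}$, $\dot r^{(0)}=-\dot z_+^{(0)}-\overline{\dot z_-^{(0)}}$, $u^{(0)}=-\mu_+^2z_+^{(0)}-\mu_-^2\overline{z_-^{(0)}}$, $g_{k,\pm}^{(0)}=g_k(z_\pm^{(0)},z_\mp^{(0)})$,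 $\dot g_{k,\pm}^{(0)}=\frac{d}{ds}g_k(Z_\pm(s),Z_\mp(s))|_{s=0}$ with $Z_\pm(s)=e^{i\mu_\pm s}z_\pm^{(0)}$; $z_\pm^{n+1}=e^{i\mu_\pm\tau}z_\pm^{(0)}$, $\dot z_\pm^{n+1}=i\mu_\pm z_\pm^{n+1}$, $\ddot z_\pm^{n+1}=-\mu_\pm^2z_\pm^{n+1}$, $r^{n+1}=\frac{\sin(\omega\tau)}{\omega}(\dot r^{(0)}-\frac\tau2u^{(0)})-\sum_{k=1}^p[P_kg_{k,+}^{(0)}+Q_k\dot g_{k,+}^{(0)}+\overline{P_kg_{k,-}^{(0)}}+\overline{Q_k\dot g_{k,-}^{(0)}}]$, $y^{n+1}=e^{i\tau/\varepsilon^2}z_+^{n+1}+e^{-i\tau/\varepsilon^2}\overline{z_-^{n+1}}+r^{n+1}$, $u^{n+1}=e^{i\tau/\varepsilon^2}\ddot z_+^{n+1}+e^{-i\tau/\varepsilon^2}\overline{\ddot z_-^{n+1}}$, $h^{n+1}=g(|y^{n+1}|^2)y^{n+1}-g(|y^{n+1}-r^{n+1}|^2)(y^{n+1}-r^{n+1})$, $\dot r^{n+1}=-\sum_{k=1}^p[\dot P_kg_{k,+}^{(0)}+\dot Q_k\dot g_{k,+}^{(0)}+\overline{\dot P_kg_{k,-}^{(0)}}+\overline{\dot Q_k\dot g_{k,-}^{(0)}}]+\cos(\omega\tau)(\dot r^{(0)}-\frac\tau2u^{(0)})-\frac\tau2(\frac{h^{n+1}}{\varepsilon^2}+u^{n+1})$,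 $\dot y^{n+1}=e^{i\tau/\varepsilon^2}(\dot z_+^{n+1}+\frac{i}{\varepsilon^2}z_+^{n+1})+e^{-i\tau/\varepsilon^2}(\overline{\dot z_-^{n+1}}-\frac{i}{\varepsilon^2}\overline{z_-^{n+1}})+\dot r^{n+1}$. *)

From Stdlib Require Import Reals.
From Coquelicot Require Import Coquelicot.

Open Scope R_scope.

Definition gfun (lam : R) (p : nat) (rho : R) : R := lam * rho ^ p.
Definition ffun (lam : R) (p : nat) (y : C) : C :=
  (RtoC (gfun lam p (Cmod y ^ 2)) * y)%C.

Definition expi (t : R) : C := (cos t, sin t).

Fixpoint Cpow (z : C) (n : nat) : C :=
  match n with O => RtoC 1 | S m => (z * Cpow z m)%C end.

Fixpoint Csum1 (F : nat -> C) (p : nat) : C :=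
  match p with O => RtoC 0 | S q => (Csum1 F q + F (S q))%C end.

(** Sum over the index set <p1,p2,p3>_m = {(p1,p2,p3) in N^3 : p1+2p2+p3 = m, p3 in {0,1}}.
    (p1, p2 <= m automatically.) *)
Definition sum_triples (m : nat) (F : nat -> nat -> nat -> R) : R :=
  sum_f_R0 (fun p1 => sum_f_R0 (fun p2 => sum_f_R0 (fun p3 =>
    if Nat.eqb (p1 + 2 * p2 + p3) m then F p1 p2 p3 else 0) 1) m) m.

(** g_+ (sel = true) and g_- (sel = false):
    sum_{<p1,p2,p3>_0} lam (rho_+ + rho_-)^p1 (rho_+ rho_-)^p2 (rho_-+)^p3,
    where rho_-+ is rho_- for g_+ and rho_+ for g_-. *)
Definition gpm (lam : R) (p : nat) (sel : bool) (rp rm : R) : R :=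
  sum_triples p (fun p1 p2 p3 =>
    lam * (rp + rm) ^ p1 * (rp * rm) ^ p2 * (if sel then rm else rp) ^ p3).

Definition gk (lam : R) (p k : nat) (zp zm : C) : C :=
  (RtoC lam * Cpow zp (S k) * Cpow zm k *
   RtoC (sum_triples (p - k) (fun p1 p2 p3 =>
     ((Cmod zp ^ 2 + Cmod zm ^ 2) ^ p1 * Cmod zp ^ (2 * p2) * Cmod zm ^ (2 * p2 + 2 * p3))%R)))%C.

Definition CDerive (F : R -> C) (s : R) : C :=
  (Derive (fun t => fst (F t)) s, Derive (fun t => snd (F t)) s).
Definition CRInt (F : R -> C) (a b : R) : C :=
  (RInt (fun t => fst (F t)) a b, RInt (fun t => snd (F t)) a b).

Definition omega (eps alpha : R) : R := sqrt (1 + eps ^ 2 * alpha) / eps ^ 2.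

Definition Pk (eps alpha tau : R) (k : nat) : C :=
  CRInt (fun th => (RtoC (sin (omega eps alpha * (tau - th)) / (eps ^ 2 * omega eps alpha))%R
                    * expi (INR (2 * k + 1) * th / eps ^ 2)%R)%C) 0 tau.
Definition Qk (eps alpha tau : R) (k : nat) : C :=
  CRInt (fun th => (RtoC (sin (omega eps alpha * (tau - th)) / (eps ^ 2 * omega eps alpha))%R
                    * expi (INR (2 * k + 1) * th / eps ^ 2)%R * RtoC th)%C) 0 tau.
Definition dPk (eps alpha tau : R) (k : nat) : C :=
  CRInt (fun th => (RtoC (cos (omega eps alpha * (tau - th)) / eps ^ 2)%R
                    * expi (INR (2 * k + 1) * th / eps ^ 2)%R)%C) 0 tau.
Definition dQk (eps alpha tau : R) (k : nat) : C :=
  CRInt (fun th => (RtoC (cos (omega eps alpha * (tau - th)) / eps ^ 2)%R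
                    * expi (INR (2 * k + 1) * th / eps ^ 2)%R * RtoC th)%C) 0 tau.

Definition mti_step (eps alpha lam : R) (p : nat) (tau : R) (yd : C * C) : C * C :=
  let (yn, dyn) := yd in
  let e2 := eps ^ 2 in
  let zp0 := ((yn - Ci * RtoC e2 * dyn) / RtoC 2)%C in
  let zm0 := ((Cconj yn - Ci * RtoC e2 * Cconj dyn) / RtoC 2)%C in
  let mup := / 2 * gpm lam p true (Cmod zp0 ^ 2) (Cmod zm0 ^ 2) + alpha / 2 in
  let mum := / 2 * gpm lam p false (Cmod zp0 ^ 2) (Cmod zm0 ^ 2) + alpha / 2 in
  let dzp0 := (Ci * RtoC mup * zp0)%C in
  let dzm0 := (Ci * RtoC mum * zm0)%C in
  let dr0 := (- dzp0 - Cconj dzm0)%C in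
  let u0 := (- RtoC (mup ^ 2) * zp0 - RtoC (mum ^ 2) * Cconj zm0)%C in
  let gkp k := gk lam p k zp0 zm0 in
  let gkm k := gk lam p k zm0 zp0 in
  let Zp s := (expi (mup * s) * zp0)%C in
  let Zm s := (expi (mum * s) * zm0)%C in
  let dgkp k := CDerive (fun s => gk lam p k (Zp s) (Zm s)) 0 in
  let dgkm k := CDerive (fun s => gk lam p k (Zm s) (Zp s)) 0 in
  let zp1 := (expi (mup * tau) * zp0)%C in
  let zm1 := (expi (mum * tau) * zm0)%C in
  let dzp1 := (Ci * RtoC mup * zp1)%C in
  let dzm1 := (Ci * RtoC mum * zm1)%C in
  let ddzp1 := (- RtoC (mup ^ 2) * zp1)%C in
  let ddzm1 := (- RtoC (mum ^ 2) * zm1)%C in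
  let w := omega eps alpha in
  let r1 := (RtoC (sin (w * tau) / w) * (dr0 - RtoC (tau / 2) * u0)
             - Csum1 (fun k => Pk eps alpha tau k * gkp k + Qk eps alpha tau k * dgkp k
                               + Cconj (Pk eps alpha tau k * gkm k)
                               + Cconj (Qk eps alpha tau k * dgkm k)) p)%C in
  let y1 := (expi (tau / e2) * zp1 + expi (- (tau / e2)) * Cconj zm1 + r1)%C in
  let u1 := (expi (tau / e2) * ddzp1 + expi (- (tau / e2)) * Cconj ddzm1)%C in
  let h1 := (ffun lam p y1 - ffun lam p (y1 - r1))%C in
  let dr1 := (- Csum1 (fun k => dPk eps alpha tau k * gkp k + dQk eps alpha tau k * dgkp k
                                 + Cconj (dPk eps alpha tau k * gkm k)
                                 + Cconj (dQk eps alpha tau k * dgkm k)) p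
              + RtoC (cos (w * tau)) * (dr0 - RtoC (tau / 2) * u0)
              - RtoC (tau / 2) * (h1 / RtoC e2 + u1))%C in
  let dy1 := (expi (tau / e2) * (dzp1 + Ci / RtoC e2 * zp1)
              + expi (- (tau / e2)) * (Cconj dzm1 - Ci / RtoC e2 * Cconj zm1) + dr1)%C in
  (y1, dy1).

Definition mti_iter (eps alpha lam : R) (p : nat) (tau : R) (phi1 phi2 : C) (n : nat) : C * C :=
  Nat.iter n (mti_step eps alpha lam p tau) (phi1, (phi2 / RtoC (eps ^ 2))%C).

Definition is_sol (eps alpha lam : R) (p : nat) (a b : R) (u du ddu : R -> C) (u0 du0 : C) : Prop :=
  u a = u0 /\ du a = du0 /\
  (forall t, a < t < b ->
     is_derive u t (du t) /\ is_derive du t (ddu t) /\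
     (RtoC (eps ^ 2) * ddu t + RtoC (alpha + / eps ^ 2) * u t + ffun lam p (u t))%C = RtoC 0) /\
  (forall t, a <= t <= b ->
     filterlim u (within (fun s => a <= s <= b) (locally t)) (locally (u t)) /\
     filterlim du (within (fun s => a <= s <= b) (locally t)) (locally (du t))).

(** Supremum over an open interval (a,b) of a real function (finite for bounded functions). *)
Definition sup_on (a b : R) (F : R -> R) : R :=
  real (Lub_Rbar (fun x => exists t, a < t < b /\ x = F t)).

Definition C0def (eps T : R) (y dy ddy : R -> C) : R :=
  Rmax (sup_on 0 T (fun t => Cmod (y t)))
       (Rmax (eps ^ 2 * sup_on 0 T (fun t => Cmod (dy t)))
             (eps ^ 4 * sup_on 0 T (fun t => Cmod (ddy t)))).

(** K_1 = ||g||_{L^inf(0,(2C_0+4)^2)} (g is continuous, so ess sup = sup). *)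
Definition K1def (lam : R) (p : nat) (C0 : R) : R :=
  sup_on 0 ((2 * C0 + 4) ^ 2) (fun rho => Rabs (gfun lam p rho)).

Definition Energy (eps alpha : R) (e de : C) : R :=
  eps ^ 2 * Cmod de ^ 2 + (alpha + / eps ^ 2) * Cmod e ^ 2.

(* Along the modified solution [yt] the nonlinearity is bounded by [K1 |yt|] as long
   as [|yt|^2 <= 3 (C0 + 1)^2 < (2 C0 + 4)^2]; the energy then grows by at most
   [exp (K1 tau) <= 4/3], which keeps [|yt|^2 <= 8/3 (C0 + 1)^2] and closes a
   bootstrap, since [tau K1 <= 1/4].  So [y] and [yt] stay in a fixed ball where [f] is
   Lipschitz with constant [L], and their difference [eta] satisfies
   [|eps^2 eta'' + (alpha + eps^-2) eta| <= L |eta|].  Differentiating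
   [E(eta(s), eta'(s)) e^{-L s}] gives [E(tau) <= e^{L tau} E(0)], and
   [e^{L tau} - 1 <= L tau e^{L T}]. *)

From Stdlib Require Import Reals Lra Psatz Classical.
From Coquelicot Require Import Coquelicot.
Open Scope R_scope.

Definition Cdot (z w : C) : R := fst z * fst w + snd z * snd w.

Lemma Cmod_sqr_fst_snd (z : C) : Cmod z ^ 2 = fst z ^ 2 + snd z ^ 2.
Proof. unfold Cmod. rewrite pow2_sqrt; nra. Qed.

Lemma Cdot_le_Cmod (z w : C) : Cdot z w <= Cmod z * Cmod w.
Proof.
  pose proof (Cmod_sqr_fst_snd z); pose proof (Cmod_sqr_fst_snd w).
  pose proof (Cmod_ge_0 z); pose proof (Cmod_ge_0 w).
  assert (Lagrange : Cdot z w ^ 2 <= (Cmod z * Cmod w) ^ 2).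
  { rewrite Rpow_mult_distr, Cmod_sqr_fst_snd, Cmod_sqr_fst_snd; unfold Cdot.
    pose proof (pow2_ge_0 (fst z * snd w - snd z * fst w)); nra. }
  apply Rnot_lt_le; intro Hlt.
  assert (0 <= Cmod z * Cmod w) by (apply Rmult_le_pos; assumption).
  nra.
Qed.

Lemma Cmod_sub_Cmod_le (a b : C) : Rabs (Cmod a - Cmod b) <= Cmod (a - b).
Proof. exact (norm_triangle_inv (V := C_NormedModule) a b). Qed.

Lemma is_derive_Cfst (u : R -> C) t l :
  is_derive u t l -> is_derive (fun s => fst (u s)) t (fst l).
Proof.
  intro H.
  apply (filterdiff_comp' u (fun z : C_R_NormedModule => fst z) t (fun y => scal y l) fst) in H.
  - exact H.
  - apply filterdiff_linear, is_linear_fst.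
Qed.

Lemma is_derive_Csnd (u : R -> C) t l :
  is_derive u t l -> is_derive (fun s => snd (u s)) t (snd l).
Proof.
  intro H.
  apply (filterdiff_comp' u (fun z : C_R_NormedModule => snd z) t (fun y => scal y l) snd) in H.
  - exact H.
  - apply filterdiff_linear, is_linear_snd.
Qed.

Lemma is_derive_Cmod_sqr (u : R -> C) t l :
  is_derive u t l -> is_derive (fun s => Cmod (u s) ^ 2) t (2 * Cdot (u t) l).
Proof.
  intro H.
  apply (is_derive_ext (fun s => fst (u s) ^ 2 + snd (u s) ^ 2)).
  { intro s; symmetry; apply Cmod_sqr_fst_snd. }
  replace (2 * Cdot (u t) l) with
    (INR 2 * fst l * fst (u t) ^ 1 + INR 2 * snd l * snd (u t) ^ 1)
    by (unfold Cdot; simpl; ring).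
  apply (is_derive_plus (fun s => fst (u s) ^ 2) (fun s => snd (u s) ^ 2));
    apply is_derive_pow; [apply is_derive_Cfst | apply is_derive_Csnd]; exact H.
Qed.

Lemma is_derive_Cminus (f g : R -> C) x df dg :
  is_derive f x df -> is_derive g x dg -> is_derive (fun s => f s - g s)%C x (df - dg)%C.
Proof. exact (is_derive_minus (V := C_R_NormedModule) f g x df dg). Qed.

Section Limits.

Context (F : (R -> Prop) -> Prop) (FF : Filter F).

Lemma filterlim_Cfst (u : R -> C) z :
  filterlim u F (locally z) -> filterlim (fun s => fst (u s)) F (locally (fst z)).
Proof.
  intro H; eapply filterlim_comp; [exact H|].
  intros P [e He]; exists e; intros [a b] [H1 _]; exact (He a H1).
Qed.

Lemma filterlim_Csnd (u : R -> C) z :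
  filterlim u F (locally z) -> filterlim (fun s => snd (u s)) F (locally (snd z)).
Proof.
  intro H; eapply filterlim_comp; [exact H|].
  intros P [e He]; exists e; intros [a b] [_ H2]; exact (He b H2).
Qed.

Lemma filterlim_Rplus (f g : R -> R) a b :
  filterlim f F (locally a) -> filterlim g F (locally b) ->
  filterlim (fun s => f s + g s) F (locally (a + b)).
Proof. intros Hf Hg; eapply filterlim_comp_2; eauto; apply (filterlim_plus (K := R_AbsRing) a b). Qed.

Lemma filterlim_Rmult (f g : R -> R) a b :
  filterlim f F (locally a) -> filterlim g F (locally b) ->
  filterlim (fun s => f s * g s) F (locally (a * b)).
Proof. intros Hf Hg; eapply filterlim_comp_2; eauto; apply (filterlim_mult (K := R_AbsRing) a b). Qed.

Lemma filterlim_Cmod_sqr (u : R -> C) z :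
  filterlim u F (locally z) -> filterlim (fun s => Cmod (u s) ^ 2) F (locally (Cmod z ^ 2)).
Proof.
  intro H.
  apply (filterlim_ext (fun s => fst (u s) * fst (u s) + snd (u s) * snd (u s))).
  { intro s; rewrite Cmod_sqr_fst_snd; ring. }
  replace (Cmod z ^ 2) with (fst z * fst z + snd z * snd z) by (rewrite Cmod_sqr_fst_snd; ring).
  apply filterlim_Rplus; apply filterlim_Rmult;
    first [apply filterlim_Cfst | apply filterlim_Csnd]; exact H.
Qed.

Lemma filterlim_Cminus (f g : R -> C) a b :
  filterlim f F (locally a) -> filterlim g F (locally b) ->
  filterlim (fun s => f s - g s)%C F (locally (a - b)%C).
Proof.
  intros Hf Hg.
  assert (Hg' : filterlim (fun s => opp (g s) : C_R_NormedModule) F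
                  (locally (opp (b : C_R_NormedModule)))).
  { eapply filterlim_comp; [exact Hg | apply (filterlim_opp (K := R_AbsRing) (V := C_R_NormedModule))]. }
  apply (filterlim_comp_2 (F := F) f (fun s => opp (g s) : C_R_NormedModule)
           (fun x y => plus (x : C_R_NormedModule) y) Hf Hg').
  apply (filterlim_plus (K := R_AbsRing) (V := C_R_NormedModule) a (opp b)).
Qed.

Lemma filterlim_Energy eps alpha (u du : R -> C) z dz :
  filterlim u F (locally z) -> filterlim du F (locally dz) ->
  filterlim (fun s => Energy eps alpha (u s) (du s)) F (locally (Energy eps alpha z dz)).
Proof.
  intros Hu Hdu. unfold Energy.
  apply filterlim_Rplus; apply filterlim_Rmult;
    try apply filterlim_const; apply filterlim_Cmod_sqr; assumption.
Qed.

End Limits.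

Definition clamp (a b s : R) : R := Rmax a (Rmin b s).

Lemma clamp_in_interval a b s : a <= b -> a <= clamp a b s <= b.
Proof. intros; unfold clamp, Rmax, Rmin; repeat destruct Rle_dec; lra. Qed.

Lemma clamp_id a b s : a <= s <= b -> clamp a b s = s.
Proof. intros; unfold clamp, Rmax, Rmin; repeat destruct Rle_dec; lra. Qed.

Lemma clamp_dist_le a b s x : a <= x <= b -> Rabs (clamp a b s - x) <= Rabs (s - x).
Proof.
  intros; unfold clamp, Rmax, Rmin;
    repeat destruct Rle_dec; unfold Rabs; repeat destruct Rcase_abs; lra.
Qed.

(* [h \o clamp a b] is continuous on all of R, so the mean value theorem applies to it. *)
Lemma le_of_derive_nonpos (h dh : R -> R) (a b : R) :
  a <= b ->
  (forall x, a < x < b -> is_derive h x (dh x) /\ dh x <= 0) ->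
  (forall x, a <= x <= b ->
     filterlim h (within (fun s => a <= s <= b) (locally x)) (locally (h x))) ->
  h b <= h a.
Proof.
  intros Hab Hd Hc.
  set (g := fun s => h (clamp a b s)).
  assert (Hg : forall x, a <= x <= b -> g x = h x) by (intros; unfold g; rewrite clamp_id; auto).
  destruct (MVT_gen g a b (fun x => Rmin (dh x) 0)) as [c [Hc_in Hgc]];
    rewrite Rmin_left, Rmax_right in * by lra.
  - intros x Hx. destruct (Hd x Hx) as [Hhx Hdx].
    rewrite Rmin_left by lra.
    apply (is_derive_ext_loc h); [|exact Hhx].
    assert (Hr : 0 < Rmin (x - a) (b - x)) by (apply Rmin_pos; lra).
    exists (mkposreal _ Hr); intros y Hy.
    change (Rabs (y - x) < Rmin (x - a) (b - x)) in Hy; apply Rabs_def2 in Hy.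
    pose proof (Rmin_l (x - a) (b - x)); pose proof (Rmin_r (x - a) (b - x)).
    symmetry; apply Hg; lra.
  - intros x Hx. apply continuity_pt_filterlim.
    unfold g; rewrite (clamp_id a b x Hx).
    eapply filterlim_comp; [|apply (Hc x Hx)].
    intros P [e He]; exists e; intros y Hy.
    apply He; [|apply clamp_in_interval; exact Hab].
    change (Rabs (y - x) < e) in Hy; change (Rabs (clamp a b y - x) < e).
    pose proof (clamp_dist_le a b y x Hx); lra.
  - rewrite !Hg in Hgc by lra.
    pose proof (Rmin_r (dh c) 0); nra.
Qed.

Lemma filterlim_within_Rabs (F : R -> R) (D : R -> Prop) m e :
  0 < e -> filterlim F (within D (locally m)) (locally (F m)) ->
  exists d, 0 < d /\ forall y, Rabs (y - m) < d -> D y -> Rabs (F y - F m) < e.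
Proof.
  intros He H.
  destruct (H _ (locally_ball (F m) (mkposreal e He))) as [d Hd].
  exists d; split; [apply cond_pos|].
  intros y Hy HDy; exact (Hd y Hy HDy).
Qed.

Lemma le_of_le_left_within (F : R -> R) (a b m B : R) :
  a < m <= b ->
  filterlim F (within (fun s => a <= s <= b) (locally m)) (locally (F m)) ->
  (forall u, a <= u < m -> F u <= B) -> F m <= B.
Proof.
  intros Hm Hc Hleft. apply Rnot_lt_le; intro Hgt.
  destruct (filterlim_within_Rabs F _ m (F m - B) ltac:(lra) Hc) as [d [Hd Hnear]].
  set (y := Rmax a (m - d / 2)).
  assert (Hy : a <= y < m /\ Rabs (y - m) < d).
  { unfold y, Rmax; destruct Rle_dec; repeat split; try lra;
      unfold Rabs; destruct Rcase_abs; lra. }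
  specialize (Hnear y (proj2 Hy) ltac:(lra)). specialize (Hleft y (proj1 Hy)).
  unfold Rabs in Hnear; destruct Rcase_abs in Hnear; lra.
Qed.

Lemma le_right_of_lt_within (F : R -> R) (a b m B : R) :
  a <= m < b -> F m < B ->
  filterlim F (within (fun s => a <= s <= b) (locally m)) (locally (F m)) ->
  exists m', m < m' <= b /\ forall u, m <= u <= m' -> F u <= B.
Proof.
  intros Hm HFm Hc.
  destruct (filterlim_within_Rabs F _ m (B - F m) ltac:(lra) Hc) as [d [Hd Hnear]].
  exists (Rmin b (m + d / 2)).
  assert (m < Rmin b (m + d / 2) <= b /\ Rmin b (m + d / 2) - m < d)
    by (unfold Rmin; destruct Rle_dec; repeat split; lra).
  split; [lra|]. intros u Hu.
  assert (Rabs (u - m) < d) by (rewrite Rabs_right; lra).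
  specialize (Hnear u ltac:(assumption) ltac:(lra)).
  unfold Rabs in Hnear; destruct Rcase_abs in Hnear; lra.
Qed.

(* Continuous induction: the set of [s] up to which [F <= B'] holds is closed (by
   continuity) and, because [B' < B] leaves room, open to the right. *)
Lemma continuous_induction (F : R -> R) (a b B B' : R) :
  a <= b -> B' < B -> F a <= B ->
  (forall t, a <= t <= b ->
     filterlim F (within (fun s => a <= s <= b) (locally t)) (locally (F t))) ->
  (forall s, a <= s <= b -> (forall u, a <= u <= s -> F u <= B) ->
     forall u, a <= u <= s -> F u <= B') ->
  forall u, a <= u <= b -> F u <= B'.
Proof.
  intros Hab HB Ha Hc Hstep.
  set (S := fun x => a <= x <= b /\ forall u, a <= u <= x -> F u <= B').
  assert (HSa : S a).
  { split; [lra|]. apply (Hstep a); [lra|]; intros u Hu; replace u with a by lra; lra. }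
  destruct (completeness S) as [m [Hub Hlub]].
  { exists b; intros x [Hx _]; lra. }
  { exists a; exact HSa. }
  assert (Ham : a <= m) by (apply Hub; exact HSa).
  assert (Hmb : m <= b) by (apply Hlub; intros x [Hx _]; lra).
  assert (Hleft : forall u, a <= u < m -> F u <= B').
  { intros u Hu. destruct (classic (exists x, S x /\ u < x)) as [[x [[_ Hx] Hux]] | Hno].
    - apply Hx; lra.
    - exfalso. assert (m <= u); [|lra].
      apply Hlub; intros x Hx; apply Rnot_lt_le; intro; eauto. }
  assert (HSm : S m).
  { split; [lra|]. intros u Hu.
    destruct (Rle_lt_or_eq_dec u m (proj2 Hu)) as [Hlt | ->]; [apply Hleft; lra|].
    destruct (Req_dec m a) as [-> | Hma]; [apply (proj2 HSa); lra|].
    apply (le_of_le_left_within F a b); [lra | apply Hc; lra | exact Hleft]. }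
  destruct (Req_dec m b) as [<- | Hmb']; [apply (proj2 HSm)|].
  exfalso.
  assert (HFm : F m <= B') by (apply (proj2 HSm); lra).
  destruct (le_right_of_lt_within F a b m B ltac:(lra) ltac:(lra) (Hc m ltac:(lra)))
    as [m' [Hm' Hright]].
  assert (S m'); [|assert (m' <= m) by (apply Hub; assumption); lra].
  split; [lra|]. apply (Hstep m'); [lra|].
  intros u Hu. destruct (Rle_dec u m); [|apply Hright; lra].
  assert (F u <= B') by (apply (proj2 HSm); lra); lra.
Qed.

Lemma two_mul_le_weighted (e c x y : R) :
  0 < e -> 1 <= c * e -> 2 * x * y <= e * x ^ 2 + c * y ^ 2.
Proof.
  intros He Hce. apply Rmult_le_reg_l with e; [exact He|].
  pose proof (pow2_ge_0 (e * x - y)); pose proof (pow2_ge_0 y).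
  assert (0 <= (c * e - 1) * y ^ 2) by (apply Rmult_le_pos; lra).
  nra.
Qed.

Lemma Cdot_comm (z w : C) : Cdot z w = Cdot w z.
Proof. unfold Cdot; ring. Qed.

Lemma Cdot_linear_l (a b : R) (z w v : C) :
  Cdot (RtoC a * z + RtoC b * w)%C v = a * Cdot z v + b * Cdot w v.
Proof. destruct z, w, v; unfold Cdot; simpl; ring. Qed.

Lemma Energy_weight_ge1 eps alpha :
  0 < eps -> 0 <= alpha -> 1 <= (alpha + / eps ^ 2) * eps ^ 2.
Proof.
  intros He Ha. assert (0 < eps ^ 2) by (apply pow_lt; lra).
  rewrite Rmult_plus_distr_r, Rinv_l by lra. nra.
Qed.

Lemma Energy_nonneg eps alpha e de :
  0 < eps -> 0 <= alpha -> 0 <= Energy eps alpha e de.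
Proof.
  intros He Ha. pose proof (Energy_weight_ge1 eps alpha He Ha).
  assert (0 < eps ^ 2) by (apply pow_lt; lra).
  unfold Energy. pose proof (pow2_ge_0 (Cmod de)); pose proof (pow2_ge_0 (Cmod e)).
  assert (0 <= alpha + / eps ^ 2) by nra.
  nra.
Qed.

(* Cauchy-Schwarz and AM-GM:
   [2 Re (F conj de) <= 2 L |e| |de| <= L (eps^2 |de|^2 + eps^-2 |e|^2)]. *)
Lemma Energy_dominates_cross_term eps alpha L (F e de : C) :
  0 < eps -> 0 <= alpha -> 0 <= L -> Cmod F <= L * Cmod e ->
  2 * Cdot F de <= L * Energy eps alpha e de.
Proof.
  intros He Ha HL HF.
  pose proof (Cdot_le_Cmod F de); pose proof (Cmod_ge_0 de).
  pose proof (two_mul_le_weighted (eps ^ 2) (alpha + / eps ^ 2) (Cmod de) (Cmod e)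
                ltac:(apply pow_lt; lra) (Energy_weight_ge1 eps alpha He Ha)).
  assert (Cmod F * Cmod de <= L * Cmod e * Cmod de) by (apply Rmult_le_compat_r; lra).
  unfold Energy. nra.
Qed.

Lemma is_derive_Energy eps alpha (u du : R -> C) t ddu_t :
  is_derive u t (du t) -> is_derive du t ddu_t ->
  is_derive (fun s => Energy eps alpha (u s) (du s)) t
    (2 * Cdot (RtoC (eps ^ 2) * ddu_t + RtoC (alpha + / eps ^ 2) * u t)%C (du t)).
Proof.
  intros Hu Hdu.
  rewrite Cdot_linear_l, (Cdot_comm (u t)).
  apply (is_derive_ext (fun s => eps ^ 2 * Cmod (du s) ^ 2 + (alpha + / eps ^ 2) * Cmod (u s) ^ 2));
    [reflexivity|].
  replace (2 * (eps ^ 2 * Cdot ddu_t (du t) + (alpha + / eps ^ 2) * Cdot (du t) (u t)))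
    with (eps ^ 2 * (2 * Cdot (du t) ddu_t) + (alpha + / eps ^ 2) * (2 * Cdot (u t) (du t)))
    by (rewrite (Cdot_comm ddu_t), (Cdot_comm (du t) (u t)); ring).
  apply (is_derive_plus (fun s => eps ^ 2 * Cmod (du s) ^ 2)
           (fun s => (alpha + / eps ^ 2) * Cmod (u s) ^ 2));
    apply is_derive_scal, is_derive_Cmod_sqr; assumption.
Qed.

(* The weighted energy [Energy (u s) (du s) * exp (- L s)] is nonincreasing. *)
Lemma Energy_gronwall eps alpha L a b (u du ddu : R -> C) :
  0 < eps -> 0 <= alpha -> 0 <= L -> a <= b ->
  (forall t, a < t < b -> is_derive u t (du t) /\ is_derive du t (ddu t) /\
     Cmod (RtoC (eps ^ 2) * ddu t + RtoC (alpha + / eps ^ 2) * u t)%C <= L * Cmod (u t)) ->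
  (forall t, a <= t <= b ->
     filterlim u (within (fun s => a <= s <= b) (locally t)) (locally (u t)) /\
     filterlim du (within (fun s => a <= s <= b) (locally t)) (locally (du t))) ->
  Energy eps alpha (u b) (du b) <= exp (L * (b - a)) * Energy eps alpha (u a) (du a).
Proof.
  intros He Ha HL Hab Hd Hc.
  set (E := fun s => Energy eps alpha (u s) (du s)).
  set (h := fun s => E s * exp (- (L * s))).
  assert (Hh : h b <= h a).
  { apply (le_of_derive_nonpos h (fun s =>
      (2 * Cdot (RtoC (eps ^ 2) * ddu s + RtoC (alpha + / eps ^ 2) * u s)%C (du s) - L * E s)
      * exp (- (L * s))) a b Hab).
    - intros x Hx. destruct (Hd x Hx) as [Hu [Hdu Hres]]. split.
      + apply (is_derive_ext (fun s => E s * exp (- (L * s)))); [reflexivity|].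
        replace (_ * exp (- (L * x))) with
          (2 * Cdot (RtoC (eps ^ 2) * ddu x + RtoC (alpha + / eps ^ 2) * u x)%C (du x)
             * exp (- (L * x)) + E x * (- L * exp (- (L * x)))) by ring.
        apply (is_derive_mult E (fun s => exp (- (L * s)))).
        * exact (is_derive_Energy eps alpha u du x (ddu x) Hu Hdu).
        * auto_derive; [exact I | ring].
        * intros; apply Rmult_comm.
      + pose proof (Energy_dominates_cross_term eps alpha L _ (u x) (du x) He Ha HL Hres).
        pose proof (exp_pos (- (L * x))). unfold E. nra.
    - intros x Hx. destruct (Hc x Hx) as [Hu Hdu].
      assert (FW : Filter (within (fun s => a <= s <= b) (locally x)))
        by apply within_filter, locally_filter.
      apply (filterlim_Rmult _ FW).
      + exact (filterlim_Energy _ FW eps alpha u du _ _ Hu Hdu).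
      + eapply filterlim_filter_le_1; [apply filter_le_within|].
        apply (ex_derive_continuous (K := R_AbsRing) (V := R_NormedModule)
                 (fun s => exp (- (L * s)))).
        auto_derive; exact I. }
  unfold h, E in Hh.
  replace (exp (L * (b - a))) with (exp (- (L * a)) * / exp (- (L * b)))
    by (rewrite <- exp_Ropp, <- exp_plus; f_equal; ring).
  pose proof (exp_pos (- (L * b))).
  apply Rmult_le_reg_r with (exp (- (L * b))); [assumption|].
  field_simplify; lra.
Qed.

Lemma pow_sub_le (Q x y : R) (n : nat) :
  0 <= x <= Q -> 0 <= y <= Q ->
  Rabs (x ^ n - y ^ n) <= INR n * (Q + 1) ^ n * Rabs (x - y).
Proof.
  intros Hx Hy. induction n as [|n IH].
  { simpl. rewrite Rminus_diag, Rabs_R0. lra. }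
  replace (x ^ S n - y ^ S n) with (x * (x ^ n - y ^ n) + y ^ n * (x - y)) by (simpl; ring).
  eapply Rle_trans; [apply Rabs_triang|].
  rewrite !Rabs_mult, (Rabs_right x), (Rabs_right (y ^ n)) by (apply Rle_ge; try apply pow_le; lra).
  assert (Hyn : y ^ n <= (Q + 1) ^ n) by (apply pow_incr; lra).
  pose proof (Rabs_pos (x - y)); pose proof (Rabs_pos (x ^ n - y ^ n)); pose proof (pos_INR n).
  assert (x * Rabs (x ^ n - y ^ n) <= (Q + 1) * (INR n * (Q + 1) ^ n * Rabs (x - y)))
    by (apply Rmult_le_compat; lra).
  assert (y ^ n * Rabs (x - y) <= (Q + 1) * (Q + 1) ^ n * Rabs (x - y)).
  { apply Rmult_le_compat_r; [assumption|].
    pose proof (pow_le (Q + 1) n ltac:(lra)); nra. }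
  rewrite S_INR; simpl. nra.
Qed.

(* Splitting f(a) - f(b) = g(|a|^2) (a - b) + (g(|a|^2) - g(|b|^2)) b. *)
Definition ffun_lip_const (lam : R) (p : nat) (r : R) : R :=
  Rabs lam * ((r ^ 2) ^ p + INR p * (r ^ 2 + 1) ^ p * 2 * r * r).

Lemma ffun_lip_const_nonneg lam p r : 0 <= r -> 0 <= ffun_lip_const lam p r.
Proof.
  intros Hr. unfold ffun_lip_const.
  apply Rmult_le_pos; [apply Rabs_pos|].
  pose proof (pow_le (r ^ 2) p ltac:(nra)); pose proof (pow_le (r ^ 2 + 1) p ltac:(nra)).
  pose proof (pos_INR p).
  assert (0 <= INR p * (r ^ 2 + 1) ^ p * 2 * r * r) by (repeat apply Rmult_le_pos; lra).
  lra.
Qed.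

Lemma ffun_lipschitz lam p r (a b : C) :
  Cmod a <= r -> Cmod b <= r ->
  Cmod (ffun lam p a - ffun lam p b) <= ffun_lip_const lam p r * Cmod (a - b).
Proof.
  intros Ha Hb. unfold ffun, gfun.
  set (ra := Cmod a ^ 2); set (rb := Cmod b ^ 2).
  replace (RtoC (lam * ra ^ p) * a - RtoC (lam * rb ^ p) * b)%C with
    (RtoC (lam * ra ^ p) * (a - b) + RtoC (lam * (ra ^ p - rb ^ p)) * b)%C
    by (apply injective_projections; simpl; ring).
  eapply Rle_trans; [apply Cmod_triangle|].
  rewrite !Cmod_mult, !Cmod_R, !Rabs_mult.
  pose proof (Cmod_ge_0 a); pose proof (Cmod_ge_0 b); pose proof (Cmod_ge_0 (a - b)).
  pose proof (Rabs_pos lam).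
  assert (Hra : 0 <= ra <= r ^ 2) by (unfold ra; split; [nra | apply pow_incr; lra]).
  assert (Hrb : 0 <= rb <= r ^ 2) by (unfold rb; split; [nra | apply pow_incr; lra]).
  assert (Hpa : Rabs (ra ^ p) <= (r ^ 2) ^ p).
  { rewrite Rabs_right by (apply Rle_ge, pow_le; lra). apply pow_incr; lra. }
  assert (Hdiff : Rabs (ra - rb) <= 2 * r * Cmod (a - b)).
  { unfold ra, rb.
    replace (Cmod a ^ 2 - Cmod b ^ 2) with ((Cmod a + Cmod b) * (Cmod a - Cmod b)) by ring.
    rewrite Rabs_mult, (Rabs_right (Cmod a + Cmod b)) by lra.
    pose proof (Cmod_sub_Cmod_le a b).
    apply Rmult_le_compat; try lra; apply Rabs_pos. }
  assert (Hpdiff : Rabs (ra ^ p - rb ^ p) * Cmod b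
                   <= INR p * (r ^ 2 + 1) ^ p * (2 * r * Cmod (a - b)) * r).
  { pose proof (pow_sub_le (r ^ 2) ra rb p Hra Hrb).
    pose proof (pos_INR p); pose proof (pow_le (r ^ 2 + 1) p ltac:(nra)).
    apply Rmult_le_compat; try apply Rabs_pos; try lra.
    eapply Rle_trans; [eassumption|].
    apply Rmult_le_compat_l; [apply Rmult_le_pos|]; assumption. }
  unfold ffun_lip_const.
  assert (Rabs lam * Rabs (ra ^ p) * Cmod (a - b) <= Rabs lam * (r ^ 2) ^ p * Cmod (a - b)).
  { apply Rmult_le_compat_r; [assumption|]. apply Rmult_le_compat_l; assumption. }
  assert (Rabs lam * Rabs (ra ^ p - rb ^ p) * Cmod b
          <= Rabs lam * (INR p * (r ^ 2 + 1) ^ p * (2 * r * Cmod (a - b)) * r)).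
  { rewrite Rmult_assoc. apply Rmult_le_compat_l; assumption. }
  nra.
Qed.

Lemma Cmod_ffun_le lam p K (a : C) :
  Rabs (gfun lam p (Cmod a ^ 2)) <= K -> Cmod (ffun lam p a) <= K * Cmod a.
Proof.
  intros H. unfold ffun. rewrite Cmod_mult, Cmod_R.
  apply Rmult_le_compat_r; [apply Cmod_ge_0 | exact H].
Qed.

Lemma exp_le_exp_of_le x y : x <= y -> exp x <= exp y.
Proof. intros [Hlt | ->]; [left; apply exp_increasing, Hlt | right; reflexivity]. Qed.

Lemma exp_mul_one_sub_le x : (1 - x) * exp x <= 1.
Proof.
  pose proof (exp_ineq1_le (- x)); pose proof (exp_pos x).
  rewrite exp_Ropp in *.
  apply Rmult_le_compat_r with (r := exp x) in H; [|lra].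
  rewrite Rinv_l in H by lra. lra.
Qed.

Lemma exp_sub_1_le x : exp x - 1 <= x * exp x.
Proof. pose proof (exp_mul_one_sub_le x); lra. Qed.

Lemma exp_le_4_3 x : x <= 1 / 4 -> exp x <= 4 / 3.
Proof.
  intros Hx. pose proof (exp_mul_one_sub_le x); pose proof (exp_pos x).
  assert (3 / 4 * exp x <= (1 - x) * exp x) by (apply Rmult_le_compat_r; lra).
  lra.
Qed.

Lemma Cmod_eq_of_add_eq_0 (X f : C) : (X + f = 0)%C -> Cmod X = Cmod f.
Proof.
  intro H. replace X with (- f)%C by (replace X with ((X + f) - f)%C by ring; rewrite H; ring).
  apply Cmod_opp.
Qed.

Lemma Cmod_sub_of_add_eq_0 (e c A1 A2 B1 B2 f1 f2 : C) :
  (e * A1 + c * B1 + f1 = 0)%C -> (e * A2 + c * B2 + f2 = 0)%C ->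
  Cmod (e * (A1 - A2) + c * (B1 - B2))%C = Cmod (f1 - f2)%C.
Proof.
  intros H1 H2. apply Cmod_eq_of_add_eq_0.
  replace (e * (A1 - A2) + c * (B1 - B2) + (f1 - f2))%C
    with ((e * A1 + c * B1 + f1) - (e * A2 + c * B2 + f2))%C by ring.
  rewrite H1, H2; ring.
Qed.

Lemma within_subset (f : R -> C) (D1 D2 : R -> Prop) t l :
  (forall x, D2 x -> D1 x) ->
  filterlim f (within D1 (locally t)) l -> filterlim f (within D2 (locally t)) l.
Proof.
  intros HD H P HP. specialize (H P HP). unfold filtermap, within in *.
  eapply filter_imp; [|exact H]. intros x Hx H2; exact (Hx (HD x H2)).
Qed.

Lemma is_sol_shift eps alpha lam p a b (y dy ddy : R -> C) y0 dy0 t0 tau :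
  is_sol eps alpha lam p a b y dy ddy y0 dy0 -> a <= t0 -> t0 + tau <= b ->
  is_sol eps alpha lam p 0 tau (fun s => y (t0 + s)) (fun s => dy (t0 + s))
    (fun s => ddy (t0 + s)) (y t0) (dy t0).
Proof.
  intros [_ [_ [Hd Hc]]] Ht0 Htau.
  assert (Hshift : forall s, is_derive (fun s => t0 + s) s 1) by (intro; auto_derive; auto).
  assert (Hscal1 : forall d : C_R_NormedModule, scal (1 : R) d = d)
    by (intro; apply (scal_one (K := R_AbsRing))).
  split; [|split; [|split]]; try (cbv beta; rewrite Rplus_0_r; reflexivity).
  - intros s Hs. destruct (Hd (t0 + s) ltac:(lra)) as [Hy [Hdy Hode]].
    pose proof (is_derive_comp y (fun s => t0 + s) s _ _ Hy (Hshift s)) as Hy'.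
    pose proof (is_derive_comp dy (fun s => t0 + s) s _ _ Hdy (Hshift s)) as Hdy'.
    rewrite Hscal1 in Hy', Hdy'. auto.
  - intros s Hs. destruct (Hc (t0 + s) ltac:(lra)) as [Hy Hdy].
    assert (Hlim : filterlim (fun s => t0 + s) (within (fun r => 0 <= r <= tau) (locally s))
                     (within (fun r => a <= r <= b) (locally (t0 + s)))).
    { intros P [d Hdd]; exists d; intros z Hz Hzin; apply Hdd; [|lra].
      change (Rabs (t0 + z - (t0 + s)) < d).
      replace (t0 + z - (t0 + s)) with (z - s) by ring; exact Hz. }
    split; eapply filterlim_comp; eauto.
Qed.

Lemma sup_on_spec a b F M :
  a < b -> (forall t, a < t < b -> 0 <= F t <= M) ->
  (forall t, a < t < b -> F t <= sup_on a b F) /\ 0 <= sup_on a b F <= M.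
Proof.
  intros Hab HF. unfold sup_on.
  set (S := fun x => exists t, a < t < b /\ x = F t).
  destruct (Lub_Rbar_correct S) as [Hub Hlub].
  assert (Hle_M : Rbar_le (Lub_Rbar S) M).
  { apply Hlub. intros x [t [Ht ->]]. apply HF, Ht. }
  assert (Hmid : Rbar_le (F ((a + b) / 2)) (Lub_Rbar S))
    by (apply Hub; exists ((a + b) / 2); split; [lra | reflexivity]).
  pose proof (proj1 (HF ((a + b) / 2) ltac:(lra))).
  destruct (Lub_Rbar S) as [l | |]; simpl in *; try contradiction.
  split; [|lra].
  intros t Ht. apply (Hub (F t)). exists t; auto.
Qed.

Lemma C0def_bounds eps T M (y dy ddy : R -> C) :
  0 < eps -> 0 < T ->
  (forall t, 0 < t < T ->
     Cmod (y t) <= M /\ Cmod (dy t) <= M / eps ^ 2 /\ Cmod (ddy t) <= M / eps ^ 4) ->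
  0 <= C0def eps T y dy ddy <= M.
Proof.
  intros He HT Hbd.
  assert (He2 : 0 < eps ^ 2) by (apply pow_lt; lra).
  assert (He4 : 0 < eps ^ 4) by (apply pow_lt; lra).
  destruct (sup_on_spec 0 T (fun t => Cmod (y t)) M HT) as [_ [Hy0 HyM]].
  { intros t Ht. split; [apply Cmod_ge_0 | apply Hbd, Ht]. }
  destruct (sup_on_spec 0 T (fun t => Cmod (dy t)) (M / eps ^ 2) HT) as [_ [_ HdyM]].
  { intros t Ht. split; [apply Cmod_ge_0 | apply Hbd, Ht]. }
  destruct (sup_on_spec 0 T (fun t => Cmod (ddy t)) (M / eps ^ 4) HT) as [_ [_ HddyM]].
  { intros t Ht. split; [apply Cmod_ge_0 | apply Hbd, Ht]. }
  unfold C0def. split; [eapply Rle_trans; [exact Hy0 | apply Rmax_l]|].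
  apply Rmax_lub; [exact HyM|]. apply Rmax_lub.
  - apply Rmult_le_compat_l with (r := eps ^ 2) in HdyM; [|lra].
    replace (eps ^ 2 * (M / eps ^ 2)) with M in HdyM by (field; lra). exact HdyM.
  - apply Rmult_le_compat_l with (r := eps ^ 4) in HddyM; [|lra].
    replace (eps ^ 4 * (M / eps ^ 4)) with M in HddyM by (field; lra). exact HddyM.
Qed.

(* [|g|] is nondecreasing on [0, oo), so every [rho] below the right end of the
   open interval is dominated by a point of it. *)
Lemma gfun_abs_le_K1def lam p C0 rho :
  0 <= C0 -> 0 <= rho < (2 * C0 + 4) ^ 2 -> Rabs (gfun lam p rho) <= K1def lam p C0.
Proof.
  intros HC0 Hrho. set (r := (2 * C0 + 4) ^ 2) in *.
  assert (Hgabs : forall x, 0 <= x -> Rabs (gfun lam p x) = Rabs lam * x ^ p).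
  { intros x Hx. unfold gfun. rewrite Rabs_mult, (Rabs_right (x ^ p)); [reflexivity|].
    apply Rle_ge, pow_le, Hx. }
  destruct (sup_on_spec 0 r (fun x => Rabs (gfun lam p x)) (Rabs lam * r ^ p) ltac:(lra))
    as [Hub _].
  { intros x Hx. split; [apply Rabs_pos|]. rewrite Hgabs by lra.
    apply Rmult_le_compat_l; [apply Rabs_pos | apply pow_incr; lra]. }
  eapply Rle_trans; [|apply (Hub ((rho + r) / 2)); lra].
  rewrite !Hgabs by lra.
  apply Rmult_le_compat_l; [apply Rabs_pos | apply pow_incr; lra].
Qed.

Lemma Energy_le_of_Cmod_le eps alpha B (e de : C) :
  0 < eps -> 0 <= alpha -> Cmod e <= B -> Cmod de <= B / eps ^ 2 ->
  Energy eps alpha e de <= 2 * (alpha + / eps ^ 2) * B ^ 2.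
Proof.
  intros He Ha Hb Hdb. unfold Energy.
  assert (0 < eps ^ 2) by (apply pow_lt; lra).
  pose proof (Cmod_ge_0 e); pose proof (Cmod_ge_0 de).
  assert (Cmod de ^ 2 <= (B / eps ^ 2) ^ 2) by (apply pow_incr; lra).
  assert (Cmod e ^ 2 <= B ^ 2) by (apply pow_incr; lra).
  assert (eps ^ 2 * (B / eps ^ 2) ^ 2 = B ^ 2 * / eps ^ 2) by (field; lra).
  assert (0 < / eps ^ 2) by (apply Rinv_0_lt_compat; lra).
  assert (eps ^ 2 * Cmod de ^ 2 <= B ^ 2 * / eps ^ 2) by nra.
  nra.
Qed.

Lemma Cmod_sqr_le_Energy eps alpha (e de : C) :
  0 < eps -> (alpha + / eps ^ 2) * Cmod e ^ 2 <= Energy eps alpha e de.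
Proof.
  intros He. unfold Energy.
  assert (0 < eps ^ 2) by (apply pow_lt; lra).
  pose proof (pow2_ge_0 (Cmod de)); nra.
Qed.

(* While [|u|^2 <= 3 B^2], the nonlinearity is bounded by [K |u|] and the energy grows
   by at most [exp (K tau) <= 4/3]; this gives [|u|^2 <= 8/3 B^2 < 3 B^2], which
   closes the bootstrap. *)
Lemma is_sol_Cmod_le eps alpha lam p tau (u du ddu : R -> C) u0 du0 B K :
  0 < eps -> 0 <= alpha -> 0 <= tau -> 0 < B -> 0 <= K -> K * tau <= 1 / 4 ->
  (forall rho, 0 <= rho <= 3 * B ^ 2 -> Rabs (gfun lam p rho) <= K) ->
  Cmod u0 <= B -> Cmod du0 <= B / eps ^ 2 ->
  is_sol eps alpha lam p 0 tau u du ddu u0 du0 ->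
  forall s, 0 <= s <= tau -> Cmod (u s) <= 2 * B.
Proof.
  intros He Ha Htau HB HK HKtau Hg Hu0 Hdu0 [Hinit [Hdinit [Hd Hc]]].
  set (c := alpha + / eps ^ 2).
  assert (Hc0 : 0 < c) by (unfold c; pose proof (Rinv_0_lt_compat (eps ^ 2)
    ltac:(apply pow_lt; lra)); lra).
  assert (HE0 : Energy eps alpha u0 du0 <= 2 * c * B ^ 2)
    by (apply Energy_le_of_Cmod_le; assumption).
  assert (Hsq : forall s, 0 <= s <= tau -> Cmod (u s) ^ 2 <= 8 / 3 * B ^ 2).
  { apply (continuous_induction (fun s => Cmod (u s) ^ 2) 0 tau (3 * B ^ 2)).
    - exact Htau.
    - nra.
    - rewrite Hinit. pose proof (Cmod_ge_0 u0).
      assert (Cmod u0 ^ 2 <= B ^ 2) by (apply pow_incr; lra). nra.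
    - intros t Ht. apply filterlim_Cmod_sqr, (proj1 (Hc t Ht)).
      apply within_filter, locally_filter.
    - intros s Hs Hsmall v Hv.
      assert (Hgrow : Energy eps alpha (u v) (du v)
                      <= exp (K * (v - 0)) * Energy eps alpha (u 0) (du 0)).
      { apply (Energy_gronwall eps alpha K 0 v u du ddu); try lra.
        - intros t Ht. destruct (Hd t ltac:(lra)) as [Hu [Hdu Hode]].
          split; [exact Hu | split; [exact Hdu|]].
          rewrite (Cmod_eq_of_add_eq_0 _ _ Hode).
          apply Cmod_ffun_le, Hg. split; [apply pow2_ge_0 | apply Hsmall; lra].
        - intros t Ht. destruct (Hc t ltac:(lra)) as [Hu Hdu].
          split; eapply within_subset; try eassumption; simpl; intros; lra. }
      rewrite Hinit, Hdinit in Hgrow.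
      assert (Hexp : exp (K * (v - 0)) <= 4 / 3) by (apply exp_le_4_3; nra).
      pose proof (Energy_nonneg eps alpha u0 du0 He Ha).
      pose proof (Cmod_sqr_le_Energy eps alpha (u v) (du v) He) as Hlow; fold c in Hlow.
      assert (exp (K * (v - 0)) * Energy eps alpha u0 du0 <= 4 / 3 * (2 * c * B ^ 2))
        by (apply Rmult_le_compat; try lra; left; apply exp_pos).
      apply Rmult_le_reg_l with c; [exact Hc0|]. lra. }
  intros s Hs. specialize (Hsq s Hs). pose proof (Cmod_ge_0 (u s)).
  nra.
Qed.

Lemma is_sol_sub_Energy_le eps alpha lam p tau r (u du ddu v dv ddv : R -> C) u0 du0 v0 dv0 :
  0 < eps -> 0 <= alpha -> 0 <= tau -> 0 <= r ->
  is_sol eps alpha lam p 0 tau u du ddu u0 du0 ->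
  is_sol eps alpha lam p 0 tau v dv ddv v0 dv0 ->
  (forall s, 0 < s < tau -> Cmod (u s) <= r /\ Cmod (v s) <= r) ->
  Energy eps alpha (u tau - v tau)%C (du tau - dv tau)%C
    <= exp (ffun_lip_const lam p r * tau) * Energy eps alpha (u0 - v0)%C (du0 - dv0)%C.
Proof.
  intros He Ha Htau Hr0 [Hu0 [Hdu0 [Hud Huc]]] [Hv0 [Hdv0 [Hvd Hvc]]] Hr.
  rewrite <- Hu0, <- Hdu0, <- Hv0, <- Hdv0.
  replace (ffun_lip_const lam p r * tau) with (ffun_lip_const lam p r * (tau - 0)) by ring.
  apply (Energy_gronwall eps alpha _ 0 tau (fun s => u s - v s)%C (fun s => du s - dv s)%C
           (fun s => ddu s - ddv s)%C He Ha (ffun_lip_const_nonneg lam p r Hr0) Htau).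
  - intros t Ht.
    destruct (Hud t Ht) as [Hu [Hdu Hodeu]], (Hvd t Ht) as [Hv [Hdv Hodev]].
    split; [apply is_derive_Cminus; assumption|].
    split; [apply is_derive_Cminus; assumption|].
    rewrite (Cmod_sub_of_add_eq_0 _ _ _ _ _ _ _ _ Hodeu Hodev).
    apply ffun_lipschitz; apply Hr, Ht.
  - intros t Ht.
    destruct (Huc t Ht) as [Hu Hdu], (Hvc t Ht) as [Hv Hdv].
    assert (FW : Filter (within (fun s => 0 <= s <= tau) (locally t)))
      by apply within_filter, locally_filter.
    split; apply (filterlim_Cminus _ FW); assumption.
Qed.

Lemma exp_growth_sub_le (L T tau E E' : R) :
  0 <= L -> 0 <= tau <= T -> 0 <= E -> E' <= exp (L * tau) * E ->
  E' - E <= L * exp (L * T) * tau * E.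
Proof.
  intros HL Htau HE HE'.
  pose proof (exp_sub_1_le (L * tau)).
  assert (exp (L * tau) <= exp (L * T)) by (apply exp_le_exp_of_le; nra).
  assert (L * tau * exp (L * tau) <= L * tau * exp (L * T))
    by (apply Rmult_le_compat_l; [apply Rmult_le_pos|]; lra).
  assert (exp (L * tau) - 1 <= L * exp (L * T) * tau) by lra.
  assert ((exp (L * tau) - 1) * E <= L * exp (L * T) * tau * E)
    by (apply Rmult_le_compat_r; assumption).
  lra.
Qed.

Theorem lemmaB3 :
  forall (alpha lam : R) (p : nat) (phi1 phi2 : C) (T M : R),
  0 <= alpha -> 0 < T ->
  exists Cst : R, 0 < Cst /\
  forall (eps : R) (y dy ddy : R -> C),
    0 < eps <= 1 ->
    is_sol eps alpha lam p 0 T y dy ddy phi1 (phi2 / RtoC (eps ^ 2))%C ->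
    (forall t, 0 < t < T ->
       Cmod (y t) <= M /\ Cmod (dy t) <= M / eps ^ 2 /\ Cmod (ddy t) <= M / eps ^ 4) ->
    forall (tau : R) (n : nat),
      0 < tau -> (INR n + 1) * tau <= T ->
      let C0 := C0def eps T y dy ddy in
      tau * ((2 * C0 + 4) * K1def lam p C0) <= 1 ->
      let yn := fst (mti_iter eps alpha lam p tau phi1 phi2 n) in
      let dyn := snd (mti_iter eps alpha lam p tau phi1 phi2 n) in
      Cmod yn <= C0 + 1 -> Cmod dyn <= (C0 + 1) / eps ^ 2 ->
      forall yt dyt ddyt : R -> C,
        is_sol eps alpha lam p 0 tau yt dyt ddyt yn dyn ->
        let tn := INR n * tau in
        let en := (y tn - yn)%C in
        let den := (dy tn - dyn)%C in
        Energy eps alpha (y (tn + tau)%R - yt tau)%C (dy (tn + tau)%R - dyt tau)%C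
          - Energy eps alpha en den
        <= Cst * tau * Energy eps alpha en den.
Proof.
  intros alpha lam p phi1 phi2 T M Ha HT.
  (* [Cst] may not depend on [eps], so the Lipschitz ball is sized by [M], not [C0]. *)
  set (r := 2 * Rabs M + 2).
  assert (Hr : 0 <= r) by (unfold r; pose proof (Rabs_pos M); lra).
  set (L := ffun_lip_const lam p r).
  assert (HL : 0 <= L) by exact (ffun_lip_const_nonneg lam p r Hr).
  exists (L * exp (L * T) + 1). split; [pose proof (exp_pos (L * T)); nra|].
  intros eps y dy ddy Heps Hsol Hbd tau n Htau HnT C0 Htau1 yn dyn Hyn Hdyn
    yt dyt ddyt Hsolt tn en den.
  assert (HC0 : 0 <= C0 <= M) by (apply C0def_bounds; lra || assumption).
  assert (HMr : M <= r /\ 2 * (C0 + 1) <= r) by (unfold r; pose proof (Rle_abs M); lra).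
  assert (Htn : 0 <= tn /\ tn + tau <= T) by (unfold tn; pose proof (pos_INR n); nra).
  set (K1 := K1def lam p C0) in Htau1.
  assert (HK1 : forall rho, 0 <= rho <= 3 * (C0 + 1) ^ 2 -> Rabs (gfun lam p rho) <= K1)
    by (intros; apply gfun_abs_le_K1def; nra).
  assert (HK1pos : 0 <= K1) by exact (Rle_trans _ _ _ (Rabs_pos _) (HK1 0 ltac:(nra))).
  assert (HK1tau : K1 * tau <= 1 / 4) by nra.
  assert (Hyt : forall s, 0 <= s <= tau -> Cmod (yt s) <= 2 * (C0 + 1))
    by (apply (is_sol_Cmod_le eps alpha lam p tau yt dyt ddyt yn dyn (C0 + 1) K1);
        try assumption; lra).
  assert (Hbounds : forall s, 0 < s < tau -> Cmod (y (tn + s)) <= r /\ Cmod (yt s) <= r).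
  { intros s Hs. split.
    - destruct (Hbd (tn + s) ltac:(lra)) as [Hy _]; lra.
    - pose proof (Hyt s ltac:(lra)); lra. }
  pose proof (is_sol_sub_Energy_le eps alpha lam p tau r _ _ _ yt dyt ddyt _ _ yn dyn
    ltac:(lra) Ha ltac:(lra) Hr (is_sol_shift _ _ _ _ _ _ _ _ _ _ _ tn tau Hsol
    ltac:(lra) ltac:(lra)) Hsolt Hbounds) as Hgrow.
  pose proof (Energy_nonneg eps alpha en den ltac:(lra) Ha) as HE.
  apply exp_growth_sub_le with (T := T) in Hgrow; [|exact HL | lra | exact HE].
  fold L en den in Hgrow.
  assert (0 <= tau * Energy eps alpha en den) by (apply Rmult_le_pos; lra).
  nra.
Qed.
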